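(* Let $\pi_\bullet\in\mathrm{Dr}(k,n)$. For every $I\in\binom{[n]}k$, $$\pi_I=-\min_{\mathbf y\in\mathrm{Vert}(B(\pi_\bullet))}\sum_{i\in I}-\tilde y_i,$$ where for a vertex $\mathbf y$ of $B(\pi_\bullet)$, $\tilde{\mathbf y}=(\tilde y_1,\dots,\tilde y_n)\in\mathbb R^n$ is its lift.
   Context: $\mathrm{Dr}(k,n)$ is the set of $\pi_\bullet\in\mathbb R^{\binom{[n]}k}$ such that for every $S\in\binom{[n]}{k-2}$ and $a<b<c<d$ in $[n]\setminus S$, $\min(\pi_{Sab}+\pi_{Scd},\pi_{Sac}+\pi_{Sbd},\pi_{Sad}+\pi_{Sbc})$ is attained at least twice. For $\mathbf x\in\mathbb R^n$, $\pi^{\mathbf x}_I=\pi_I-\sum_{i\in I}x_i$, and $M(\pi^{\mathbf x}_\bullet)=\{I:\pi^{\mathbf x}_I=\min_J\pi^{\mathbf x}_J\}$ (a matroid). The tropical linear space $L(\pi_\bullet)\subset\mathbb R^n/\mathbf 1$ is the set of $\mathbf x$ such that for each $\tau\in\binom{[n]}{k+1}$, $\min_{i\in\tau}(\pi_{\tau\setminus i}+x_i)$ is attained at least twice. Its matroid complex structure is the stratification into faces on which $M(\pi^{\mathbf x}_\bullet)$ is constant; $B(\pi_\bullet)$ is the subcomplex of bounded faces and $\mathrm{Vert}(B(\pi_\bullet))$ its vertices. For $\mathbf y\in L(\pi_\bullet)$ its lift $\tilde{\mathbf y}\in\mathbb R^n$ is the representative with $\min_I\pi^{\tilde{\mathbf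 y}}_I=0$. *)

From HB Require Import structures.
From mathcomp Require Import all_boot all_order all_algebra.
From mathcomp Require Import reals.

Set Implicit Arguments.
Unset Strict Implicit.
Unset Printing Implicit Defensive.

Import Order.TTheory GRing.Theory Num.Theory.
Local Open Scope ring_scope.

Section Defs.
Variable R : realType.
Variables (k n : nat).

Definition min3_twice (p q r : R) : Prop :=
  (p = q /\ p <= r) \/ (p = r /\ p <= q) \/ (q = r /\ q <= p).

(* Dr(k,n): pi is indexed by subsets of [n] = 'I_n; only k-subsets matter. *)
Definition Dressian (pi : {set 'I_n} -> R) : Prop :=
  forall (S : {set 'I_n}) (a b c d : 'I_n),
    (#|S| + 2)%N = k ->
    a \notin S -> b \notin S -> c \notin S -> d \notin S ->
    (a < b)%N -> (b < c)%N -> (c < d)%N ->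
    min3_twice (pi (a |: (b |: S)) + pi (c |: (d |: S)))
               (pi (a |: (c |: S)) + pi (b |: (d |: S)))
               (pi (a |: (d |: S)) + pi (b |: (c |: S))).

Definition min_twice (A : {set 'I_n}) (f : 'I_n -> R) : Prop :=
  exists i j, [/\ i \in A, j \in A, i != j,
    (forall l, l \in A -> f i <= f l) & (forall l, l \in A -> f j <= f l)].

(* x (a representative in R^n of a point of R^n/1) lies in L(pi) *)
Definition inL (pi : {set 'I_n} -> R) (x : 'I_n -> R) : Prop :=
  forall tau : {set 'I_n}, #|tau| = k.+1 ->
    min_twice tau (fun i => pi (tau :\ i) + x i).

Definition piX (pi : {set 'I_n} -> R) (x : 'I_n -> R) (I : {set 'I_n}) : R :=
  pi I - \sum_(i in I) x i.

Definition Mat (pi : {set 'I_n} -> R) (x : 'I_n -> R) : {set {set 'I_n}} :=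
  [set I : {set 'I_n} | (#|I| == k) &&
     [forall J : {set 'I_n}, (#|J| == k) ==> (piX pi x I <= piX pi x J)]].

(* the (relatively open) face of the matroid complex structure of L(pi)
   containing x: points of L(pi) with the same matroid M(pi^z) *)
Definition face (pi : {set 'I_n} -> R) (x : 'I_n -> R) : ('I_n -> R) -> Prop :=
  fun z => inL pi z /\ Mat pi z = Mat pi x.

Definition bounded_mod1 (F : ('I_n -> R) -> Prop) : Prop :=
  exists C : R, forall z, F z -> forall i j, `|z i - z j| <= C.

(* F is the single point y in R^n/1 (together with F y) *)
Definition point_mod1 (F : ('I_n -> R) -> Prop) (y : 'I_n -> R) : Prop :=
  forall z, F z -> exists t : R, forall i, z i = y i + t.

(* y (representative) is a vertex of the bounded complex B(pi):
   its face is a bounded, 0-dimensional face of L(pi) *)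
Definition is_vertex_B (pi : {set 'I_n} -> R) (y : 'I_n -> R) : Prop :=
  [/\ inL pi y, bounded_mod1 (face pi y) & point_mod1 (face pi y) y].

Definition is_lift (pi : {set 'I_n} -> R) (y yt : 'I_n -> R) : Prop :=
  [/\ exists t : R, forall i, yt i = y i + t,
      exists J : {set 'I_n}, #|J| = k /\ piX pi yt J = 0 &
      forall J : {set 'I_n}, #|J| = k -> 0 <= piX pi yt J].

Definition is_min (P : R -> Prop) (m : R) : Prop :=
  P m /\ forall v, P v -> m <= v.

End Defs.

From HB Require Import structures.
From mathcomp Require Import all_boot all_order all_algebra.
From mathcomp Require Import reals.
From mathcomp Require Import lra zify.
Import Order.TTheory GRing.Theory Num.Theory.
Local Open Scope ring_scope.

Set Implicit Arguments.
Unset Strict Implicit.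
Unset Printing Implicit Defensive.

(* Write c(i,j) = pi(I - i + j) - pi(I).  The three-term Dressian relations imply the
   full tropical Plucker exchange for every pi^y (induction on |T \ S|), hence a k-set
   that beats all its single exchanges minimises pi^y, and y lies in L(pi) as soon as
   every element lies in a minimiser.  Fix i0 in I and j0 outside I, and put
   y_j = c(i0,j) for j outside I and y_i = max_j (c(i0,j) - c(i,j)) for i in I.  Then
   I minimises pi^y, and the tight pairs (i0, j) and (i, argmax) form a spanning tree
   of the bipartite exchange graph; since M(pi^z) = M(pi^y) forces z_j - z_i = c(i,j)
   on tight pairs, z - y is constant, so y is a vertex of B(pi) whose lift satisfies
   pi^y~_I = 0.  The reverse inequality is pi^y~_I >= 0 for every lift. *)

Section ThreeTermExchange.
Variables (R : realDomainType) (E : finType) (k : nat).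
Implicit Types (w : {set E} -> R) (S T I J : {set E}) (a b c d : E).

Definition pair_sum w S a b c d := w (a |: (b |: S)) + w (c |: (d |: S)).

Definition exchange_at w S a b c d :=
  pair_sum w S a c b d <= pair_sum w S a b c d \/
  pair_sum w S a d b c <= pair_sum w S a b c d.

Definition exchange3 w := forall S a b c d, (#|S| + 2)%N = k ->
  uniq [:: a; b; c; d] -> all [predC S] [:: a; b; c; d] -> exchange_at w S a b c d.

Lemma exchange_atC w S a b c d : exchange_at w S a b c d -> exchange_at w S b a c d.
Proof.
rewrite /exchange_at /pair_sum (setUCA [set b] [set a]) => -[h|h]; [right|left]; lra.
Qed.

Lemma exchange_atCr w S a b c d : exchange_at w S a b c d -> exchange_at w S a b d c.
Proof.
rewrite /exchange_at /pair_sum (setUCA [set d] [set c]) => -[h|h]; [right|left]; lra.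
Qed.

Lemma exchange_at_swap w S a b c d : exchange_at w S a b c d -> exchange_at w S c d a b.
Proof.
rewrite /exchange_at /pair_sum (setUCA [set c] [set a]) (setUCA [set d] [set b]).
by rewrite (setUCA [set c] [set b]) (setUCA [set d] [set a]) => -[h|h]; [left|right]; lra.
Qed.

Lemma setD_pair S T a : S \subset T -> #|T| = (#|S| + 2)%N -> a \in T :\: S ->
  exists2 b, b \in T :\: S :\ a & T :\ a = b |: S /\ T :\ b = a |: S.
Proof.
move=> sST cardT aTS; have /setDP[aT aS] := aTS.
have : #|T :\: S| = 2 by rewrite cardsD (setIidPr sST) cardT addnC addnK.
rewrite (cardsD1 a) aTS => -[/eqP/cards1P[b defb]].
have /setD1P[ba /setDP[bT bS]] : b \in T :\: S :\ a by rewrite defb set11.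
have defT : T = a |: (b |: S).
  apply/eqP; rewrite eq_sym eqEcard !subUset !sub1set aT bT sST /=.
  by rewrite !cardsU1 !inE negb_or (eq_sym a) ba aS bS cardT addnC.
exists b; first by rewrite defb set11.
rewrite defT setU1K ?(setUCA [set a]) ?setU1K // !inE negb_or ?aS ?bS ?andbT //.
by rewrite eq_sym.
Qed.

Lemma setD1U1 x y (A : {set E}) : x != y -> (x |: A) :\ y = x |: (A :\ y).
Proof.
by move=> xy; apply/setP=> z; rewrite !inE; case: (eqVneq z x) => [->|]; rewrite ?xy.
Qed.

Lemma sum_setU2 (y : E -> R) S a b : a != b -> a \notin S -> b \notin S ->
  \sum_(i in a |: (b |: S)) y i = y a + y b + \sum_(i in S) y i.
Proof. by move=> ab aS bS; rewrite big_setU1 ?big_setU1 /= ?addrA // !inE negb_or ab. Qed.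

Lemma exchange3_shift w (y : E -> R) :
  exchange3 w -> exchange3 (fun J => w J - \sum_(i in J) y i).
Proof.
move=> w3 S a b c d cardS uq out; have := w3 S a b c d cardS uq out.
rewrite /= !inE in uq out.
case/and4P: uq => /norP[ab /norP[ac ad]] /norP[bc bd] cd _.
case/and5P: out => aS bS cS dS _.
by rewrite /exchange_at /pair_sum !sum_setU2 // => -[h|h]; [left|right]; lra.
Qed.

Variable w : {set E} -> R.
Hypothesis w3 : exchange3 w.

Lemma exchange3_plucker S T a : #|S|.+1 = k -> #|T| = k.+1 -> a \in T :\: S ->
  exists2 t, t \in T :\: S :\ a & w (t |: S) + w (T :\ t) <= w (a |: S) + w (T :\ a).
Proof.
move: {2}#|T :\: S| (erefl #|T :\: S|) => m.
elim/ltn_ind: m S => m IH S cardTS cardS cardT aTS.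
have [sST|/subsetPn[s sS sT]] := boolP (S \subset T).
  have [|b bTSa [Ta Tb]] := setD_pair sST _ aTS; first by rewrite cardT -cardS addn2.
  by exists b => //; rewrite Ta Tb addrC.
have /setDP[aT aS] := aTS.
set S0 := S :\ s.
have S0s x : s |: (x |: S0) = x |: S by rewrite setUCA setD1K.
have cardS0 : (#|S0| + 2)%N = k by rewrite -cardS (cardsD1 s S) sS addn2.
have [b bTSa bmin] : exists2 b, b \in T :\: S :\ a & forall t, t \in T :\: S :\ a ->
    w (a |: (b |: S0)) + w (T :\ b) <= w (a |: (t |: S0)) + w (T :\ t).
  have : (0 < #|T :\: S :\ a|)%N.
    have := subset_leq_card (subsetIr T S); have := cardsD1 a (T :\: S).
    rewrite aTS cardsD; lia.
  case/card_gt0P=> b0 b0TSa.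
  by case: (arg_minP (fun t => w (a |: (t |: S0)) + w (T :\ t)) b0TSa) => b; exists b.
have /setD1P[ba bTS] := bTSa; have /setDP[bT bS] := bTS.
have TSb : T :\: (b |: S0) = T :\: S :\ b.
  apply/setP=> x; rewrite !inE; case: (x =P s) => [->|_]; first by rewrite (negbTE sT) !andbF.
  by rewrite negb_or andbA.
have [|||t] := IH _ _ (b |: S0) (erefl _) _ cardT.
- by rewrite TSb -cardTS (cardsD1 b (T :\: S)) bTS add1n.
- by rewrite cardsU1 /S0 !inE (negbTE bS) andbF -cardS (cardsD1 s S) sS.
- by rewrite TSb !inE eq_sym ba aT aS.
rewrite TSb => /setD1P[ta /setD1P[tb tTS]] ht.
have /setDP[tT tS] := tTS.
have bmin_t := bmin t (introT setD1P (conj ta tTS)).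
rewrite (setUCA [set t]) in ht.
have sx x : x \in T -> (s == x) = false by move=> xT; apply: contraNF sT => /eqP->.
have uq : uniq [:: s; a; b; t].
  by rewrite /= !inE !sx // (eq_sym a) (negbTE ba) (eq_sym a) (negbTE ta) eq_sym tb.
have out : all [predC S0] [:: s; a; b; t].
  by rewrite /= /S0 !inE eqxx (negbTE aS) (negbTE bS) (negbTE tS) !andbF.
(* The three-term relation at S :\ s, combined with the choice of b, lets b or t win. *)
have [] := w3 cardS0 uq out; rewrite /pair_sum !S0s => h.
- by exists b => //; lra.
- by exists t; [apply/setD1P | lra].
Qed.

Lemma exchange3_local_min I : #|I| = k ->
    (forall i j, i \in I -> j \notin I -> w I <= w (j |: (I :\ i))) ->
  forall J, #|J| = k -> w I <= w J.
Proof.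
move=> cardI locI J; move: {2}#|J :\: I| (erefl #|J :\: I|) => m.
elim/ltn_ind: m J => m IH J cardJI cardJ.
have [/eqP|[j jJI]] := set_0Vmem (J :\: I).
  rewrite setD_eq0 => sJI.
  by have /eqP-> : J == I by rewrite eqEcard sJI cardI cardJ /=.
have /setDP[jJ jI] := jJI.
have cardJj : #|J :\ j|.+1 = k by rewrite -cardJ (cardsD1 j J) jJ.
have [||t] := exchange3_plucker cardJj (_ : #|j |: I| = k.+1)
  (_ : j \in (j |: I) :\: (J :\ j)).
- by rewrite cardsU1 jI cardI.
- by rewrite !inE eqxx.
rewrite setD1K // setU1K // => /setD1P[tj /setDP[/setU1P[/eqP|tI]]].
  by rewrite (negbTE tj).
rewrite !inE tj /= => tJ.
rewrite setD1U1 1?eq_sym // => ht.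
have := locI t j tI jI.
have : w I <= w (t |: (J :\ j)).
  apply: (IH #|(J :\: I) :\ j|); last by rewrite cardsU1 !inE tj tJ -cardJ (cardsD1 j J) jJ.
  - by rewrite -cardJI (cardsD1 j (J :\: I)) jJI.
  - apply: eq_card => x; rewrite !inE.
    by case: (eqVneq x t) => [->|_]; rewrite ?tI ?andbF //= andbCA.
lra.
Qed.

End ThreeTermExchange.

Lemma min3_twice_le (R : realType) (p q r : R) : min3_twice p q r ->
  [/\ q <= p \/ r <= p, p <= q \/ r <= q & p <= r \/ q <= r].
Proof. by case=> [[-> h]|[[-> h]|[-> h]]]; split; lra. Qed.

Lemma dressian_exchange3 (R : realType) (k n : nat) (pi : {set 'I_n} -> R) :
  Dressian k pi -> exchange3 k pi.
Proof.
move=> Dpi S a b c d HS.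
wlog ab : a b / (a < b)%N.
  move=> gen; have [ab|ba|/val_inj->] := ltngtP a b; first exact: gen.
    have pab := permEl (perm_catCA [:: a] [:: b] [:: c; d]).
    by rewrite (perm_uniq pab) (perm_all _ pab) => uq out; apply/exchange_atC/gen.
  by rewrite /= inE eqxx.
wlog cd : c d / (c < d)%N.
  move=> gen; have [cd|dc|/val_inj->] := ltngtP c d; first exact: gen.
    have pcd : perm_eq [:: a; b; c; d] [:: a; b; d; c].
      by rewrite !perm_cons; exact: permEl (perm_catCA [:: c] [:: d] [::]).
    by rewrite (perm_uniq pcd) (perm_all _ pcd) => uq out; apply/exchange_atCr/gen.
  by rewrite /= !inE eqxx !(orbT, andbF).
wlog ac : a b c d ab cd / (a < c)%N.
  move=> gen; have [ac|ca|/val_inj->] := ltngtP a c; first exact: gen.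
    have p := permEl (perm_catC [:: a; b] [:: c; d]).
    by rewrite (perm_uniq p) (perm_all _ p) => uq out; apply/exchange_at_swap/gen.
  by rewrite /= !inE eqxx !(orbT, andbF).
rewrite /= !inE => /and4P[_ /norP[ne_bc ne_bd] _ _] /and5P[na nb nc nd _].
have [bc|cb|/val_inj/eqP] := ltngtP b c; last by rewrite (negbTE ne_bc).
  by have [] := min3_twice_le (Dpi S a b c d HS na nb nc nd ab bc cd).
have [bd|db|/val_inj/eqP] := ltngtP b d; last by rewrite (negbTE ne_bd).
  have [_ + _] := min3_twice_le (Dpi S a c b d HS na nc nb nd ac cb bd).
  by rewrite /exchange_at /pair_sum (setUCA [set c] [set b]) => -[]; [left|right].
have [_ _ +] := min3_twice_le (Dpi S a c d b HS na nc nd nb ac cd db).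
rewrite /exchange_at /pair_sum (setUCA [set c] [set b]) (setUCA [set d] [set b]).
by move=> -[]; [left|right].
Qed.

Section Tropical.
Variables (R : realType) (k n : nat) (pi : {set 'I_n} -> R).
Implicit Types (x y z : 'I_n -> R) (I J : {set 'I_n}) (i j : 'I_n).

Lemma mem_Mat x J :
  reflect (#|J| = k /\ forall J', #|J'| = k -> piX pi x J <= piX pi x J') (J \in Mat k pi x).
Proof.
rewrite inE; apply: (iffP andP) => [[/eqP cardJ /forallP Jmin]|[cardJ Jmin]].
  by split=> // J' cardJ'; have /implyP := Jmin J'; apply; rewrite cardJ'.
by rewrite cardJ; split=> //; apply/forallP=> J'; apply/implyP=> /eqP/Jmin.
Qed.

Definition exchange_cost I i j := pi (j |: (I :\ i)) - pi I.

Lemma card_exchange I i j : i \in I -> j \notin I -> #|j |: (I :\ i)| = #|I|.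
Proof. by move=> iI jI; rewrite cardsU1 (cardsD1 i I) iI !inE (negbTE jI) andbF. Qed.

Lemma piX_exchange y I i j : i \in I -> j \notin I ->
  piX pi y (j |: (I :\ i)) = piX pi y I + exchange_cost I i j - (y j - y i).
Proof.
move=> iI jI; rewrite /piX /exchange_cost (big_setD1 i iI) big_setU1 /=; first lra.
by rewrite !inE (negbTE jI) andbF.
Qed.

Lemma piX_setD1 y J i : i \in J ->
  piX pi y (J :\ i) = pi (J :\ i) + y i - \sum_(l in J) y l.
Proof. by move=> iJ; rewrite /piX (big_setD1 i iJ) /=; lra. Qed.

Lemma Mat_piX_eq x I J : I \in Mat k pi x -> J \in Mat k pi x -> piX pi x I = piX pi x J.
Proof.
move=> /mem_Mat[cardI Imin] /mem_Mat[cardJ Jmin].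
by apply/eqP; rewrite eq_le Imin ?Jmin.
Qed.

Lemma Mat_local y I : exchange3 k (piX pi y) -> #|I| = k ->
    (forall i j, i \in I -> j \notin I -> y j - y i <= exchange_cost I i j) ->
  I \in Mat k pi y.
Proof.
move=> w3 cardI feas; apply/mem_Mat; split=> //.
apply: (exchange3_local_min w3 cardI) => i j iI jI.
by rewrite piX_exchange //; have := feas i j iI jI; lra.
Qed.

Lemma Mat_exchange y I i j : I \in Mat k pi y -> i \in I -> j \notin I ->
  y j - y i = exchange_cost I i j -> j |: (I :\ i) \in Mat k pi y.
Proof.
move=> /mem_Mat[cardI Imin] iI jI tight; apply/mem_Mat.
rewrite card_exchange // piX_exchange // tight; split=> // J cardJ.
by have := Imin J cardJ; lra.
Qed.

Lemma Mat_exchange_diff z I i j : I \in Mat k pi z -> j |: (I :\ i) \in Mat k pi z ->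
  i \in I -> j \notin I -> z j - z i = exchange_cost I i j.
Proof.
move=> IM JM iI jI; have := Mat_piX_eq IM JM; rewrite piX_exchange //; lra.
Qed.

Lemma inL_loopless y : exchange3 k (piX pi y) ->
  (forall e, exists2 B, B \in Mat k pi y & e \in B) -> inL k pi y.
Proof.
move=> w3 loopless tau cardtau.
have [e etau] : exists e, e \in tau by apply/card_gt0P; rewrite cardtau.
have [i0 i0tau i0min] := arg_minP (fun i => pi (tau :\ i) + y i) etau.
have [B /mem_Mat[cardB Bmin] i0B] := loopless i0.
have cardBi0 : #|B :\ i0|.+1 = k by rewrite -cardB (cardsD1 i0 B) i0B.
have [|t] := exchange3_plucker w3 cardBi0 cardtau (_ : i0 \in tau :\: (B :\ i0)).
  by rewrite !inE eqxx.
rewrite setD1K // => /setD1P[ti0 /setDP[ttau tB]].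
have := Bmin (t |: (B :\ i0)); rewrite cardsU1 tB add1n cardBi0 => /(_ erefl).
rewrite !piX_setD1 // => Bt ht.
have t_le_i0 : pi (tau :\ t) + y t <= pi (tau :\ i0) + y i0 by lra.
exists i0, t; split=> // [|l ltau]; first by rewrite eq_sym.
exact: le_trans t_le_i0 (i0min l ltau).
Qed.

Lemma bounded_of_point (F : ('I_n -> R) -> Prop) y : point_mod1 F y -> bounded_mod1 F.
Proof.
move=> Fy; exists (\sum_(p : 'I_n * 'I_n) `|y p.1 - y p.2|) => z /Fy[t zt] i j.
have -> : z i - z j = y i - y j by rewrite !zt; lra.
rewrite (bigD1 (i, j)) //= lerDl; exact: sumr_ge0.
Qed.

Lemma piX_shift y t J : piX pi (fun l => y l + t) J = piX pi y J - t *+ #|J|.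
Proof. by rewrite /piX big_split sumr_const /=; lra. Qed.

Lemma lift_of_Mat y I : (0 < k)%N -> I \in Mat k pi y ->
  exists2 yt, is_lift k pi y yt & piX pi yt I = 0.
Proof.
move=> k_gt0 /mem_Mat[cardI Imin]; set t := piX pi y I / k%:R.
have shift J : #|J| = k -> piX pi (fun l => y l + t) J = piX pi y J - piX pi y I.
  by move=> cardJ; rewrite piX_shift cardJ -mulr_natr divfK // pnatr_eq0 -lt0n.
exists (fun l => y l + t); last by rewrite shift // subrr.
split; first by exists t.
  by exists I; rewrite shift // subrr.
by move=> J cardJ; rewrite shift // subr_ge0 Imin.
Qed.

End Tropical.

Section StarPoint.
Variables (R : realType) (k n : nat) (pi : {set 'I_n} -> R).
Variables (I : {set 'I_n}) (i0 j0 : 'I_n).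
Hypotheses (i0I : i0 \in I) (j0I : j0 \notin I).

Local Notation cost := (exchange_cost pi I).

Definition partner i := [arg max_(j > j0 | j \notin I) (cost i0 j - cost i j)]%O.

Definition star_point : 'I_n -> R :=
  fun x => if x \in I then cost i0 (partner x) - cost x (partner x) else cost i0 x.

Lemma partner_spec i : partner i \notin I /\
  forall j, j \notin I -> cost i0 j - cost i j <= cost i0 (partner i) - cost i (partner i).
Proof. by rewrite /partner; case: arg_maxP. Qed.

Lemma star_point_root : star_point i0 = 0.
Proof. by rewrite /star_point i0I subrr. Qed.

Lemma star_point_feasible i j : i \in I -> j \notin I ->
  star_point j - star_point i <= cost i j.
Proof.
move=> iI jI; have [_ pmax] := partner_spec i.
by rewrite /star_point iI (negbTE jI); have := pmax j jI; lra.
Qed.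

Lemma star_point_tight_root j : j \notin I -> star_point j - star_point i0 = cost i0 j.
Proof. by move=> jI; rewrite star_point_root /star_point (negbTE jI) subr0. Qed.

Lemma star_point_tight_partner i : i \in I ->
  star_point (partner i) - star_point i = cost i (partner i).
Proof.
move=> iI; have [pI _] := partner_spec i.
by rewrite /star_point iI (negbTE pI); lra.
Qed.

Hypotheses (cardI : #|I| = k) (pi3 : exchange3 k pi).

Lemma star_point_Mat : I \in Mat k pi star_point.
Proof. exact: Mat_local (exchange3_shift _ pi3) cardI star_point_feasible. Qed.

Lemma star_point_vertex : is_vertex_B k pi star_point.
Proof.
have w3 : exchange3 k (piX pi star_point) := exchange3_shift _ pi3.
have rootM j : j \notin I -> j |: (I :\ i0) \in Mat k pi star_point.
  by move=> jI; apply: Mat_exchange star_point_Mat i0I jI (star_point_tight_root jI).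
have point : point_mod1 (face k pi star_point) star_point.
  move=> z [_ Mz]; exists (z i0 - star_point i0) => x.
  have zM J : (J \in Mat k pi z) = (J \in Mat k pi star_point) by rewrite Mz.
  have IzM : I \in Mat k pi z by rewrite zM star_point_Mat.
  have root_diff j : j \notin I -> z j - z i0 = star_point j - star_point i0.
    move=> jI; have jM : j |: (I :\ i0) \in Mat k pi z by rewrite zM rootM.
    by rewrite star_point_tight_root // (Mat_exchange_diff IzM jM i0I jI).
  have [xI|xI] := boolP (x \in I); last by have := root_diff x xI; lra.
  have [pI _] := partner_spec x.
  have y_tight := star_point_tight_partner xI.
  have pM : partner x |: (I :\ x) \in Mat k pi z.
    by rewrite zM (Mat_exchange star_point_Mat xI pI y_tight).
  have := Mat_exchange_diff IzM pM xI pI; have := root_diff _ pI; lra.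
split=> //; last exact: bounded_of_point point.
apply: inL_loopless w3 _ => e; have [eI|eI] := boolP (e \in I).
  by exists I; rewrite ?star_point_Mat.
by exists (e |: (I :\ i0)); [exact: rootM | rewrite setU11].
Qed.

End StarPoint.

Theorem proposition2p4 (R : realType) (k n : nat) (pi : {set 'I_n} -> R) :
  (0 < k < n)%N ->
  Dressian k pi ->
  forall I : {set 'I_n}, #|I| = k ->
    is_min (fun v : R => exists y yt : 'I_n -> R,
              [/\ is_vertex_B k pi y, is_lift k pi y yt &
                  v = \sum_(i in I) - yt i])
           (- pi I).
Proof.
case/andP=> k_gt0 k_lt_n /dressian_exchange3 pi3 I cardI; split.
  have [i0 i0I] : exists i0, i0 \in I by apply/card_gt0P; rewrite cardI.
  have [j0] : exists j0, j0 \in ~: I.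
    by apply/card_gt0P; have := cardsC I; rewrite card_ord cardI; lia.
  rewrite inE => j0I.
  have [yt yt_lift ytI] := lift_of_Mat k_gt0 (star_point_Mat i0 j0I cardI pi3).
  exists (star_point pi I i0 j0), yt; split=> //; first exact: star_point_vertex.
  by move: ytI; rewrite /piX sumrN; lra.
move=> _ [y [yt [_ [_ _ yt_ge0] ->]]].
by have := yt_ge0 I cardI; rewrite /piX sumrN; lra.
Qed.
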